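(* Let $D$ be a digraph whose vertex set $V$ is a finite subset of $\mathbb{Z}_{>0}$, and let $\overline{D}$ be its complement. Then $\omega\,\Xi_D(\mathbf{x},t)=\Xi_{\overline{D}}(\mathbf{x},t)$.
   Context: A digraph is a finite directed graph without loops or multiple edges (both $u\to v$ and $v\to u$ may be present). The complement $\overline{D}$ has the same vertices and an edge $u\to v$ ($u\ne v$) iff $D$ has no edge $u\to v$. A composition $\beta=(\beta_1,\dots,\beta_\ell)$ of $n$ is a sequence of positive integers summing to $n$; it is identified with the set of ''bars'' $\{\beta_1,\beta_1+\beta_2,\dots,\beta_1+\cdots+\beta_{\ell-1}\}\subseteq[n-1]$; $\alpha\le\beta$ means the bar set of $\alpha$ is contained in that of $\beta$. The monomial quasisymmetric function is $M_\beta=\sum_{i_1<\cdots<i_\ell}x_{i_1}^{\beta_1}\cdots x_{i_\ell}^{\beta_\ell}$. The linear map $\omega$ on quasisymmetric functions of degree $n$ (extended coefficientwise to coefficients in $\mathbb{Z}[t]$) is $\omega M_\beta=(-1)^{n-\ell(\beta)}\sum_{\alpha\le\beta}M_\alpha$. Let $n=|V|$. A sequencing is a bijection $q:[n]\to V$. An ordered path cover of $D$ is a pair $(q,\beta)$ with $q$ a sequencing and $\beta$ a composition of $n$ such that, with $B_i=\beta_1+\cdots+\beta_i$ ($B_0=0$), $q(B_{i-1}+1)\to q(B_{i-1}+2)\to\cdots\to q(B_i)$ is a directed path in $D$ for every $i$. $\mathrm{asc}(q)$ is the number of pairs $\{u,v\}$ of vertices such that (1) either both $u\to v$ and $v\to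 u$ are edges of $D$ or neither is, (2) $u<v$, and (3) $v$ appears later than $u$ in $q$. Then $\Xi_D(\mathbf{x},t)=\sum_{(q,\beta)}t^{\mathrm{asc}(q)}M_\beta$, summed over ordered path covers of $D$. *)

From HB Require Import structures.
From mathcomp Require Import all_boot all_order all_algebra.
From mathcomp Require Export finmap.
Set Implicit Arguments.
Unset Strict Implicit.
Unset Printing Implicit Defensive.
Import GRing.Theory.
Local Open Scope ring_scope.

(* Compositions of n are identified with their bar sets, subsets of [n-1].
   An element j : 'I_n.-1 of a bar set represents the bar j+1 \in [n-1].
   So alpha <= beta  iff  (bars alpha) \subset (bars beta), and
   l(beta) = #|bars| + 1 for n >= 1 (l = 0 for the empty composition of 0);
   in all cases n - l(beta) = n.-1 - #|bars beta|. *)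

(* A quasisymmetric function of degree n with coefficients in Z[t], written
   in the monomial basis: F = \sum_beta F(beta) M_beta. *)
Definition qsym (n : nat) := {ffun {set 'I_n.-1} -> {poly int}}.

(* omega M_beta = (-1)^(n - l(beta)) \sum_{alpha <= beta} M_alpha, extended
   linearly; coefficient of M_alpha in omega F: *)
Definition qomega (n : nat) (F : qsym n) : qsym n :=
  [ffun A : {set 'I_n.-1} =>
     \sum_(B : {set 'I_n.-1} | A \subset B) (-1) ^+ (n.-1 - #|B|)%N * F B].

Lemma succ_ord_proof n (j : 'I_n.-1) : (j.+1 < n)%N.
Proof. by case: n j => [[]|n] j //=; rewrite ltnS; apply: ltn_ord. Qed.

Definition cur_ord n (j : 'I_n.-1) : 'I_n := widen_ord (leq_pred n) j.
Definition succ_ord n (j : 'I_n.-1) : 'I_n := Ordinal (succ_ord_proof j).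

Definition digraph_compl (T : eqType) (E : rel T) : rel T :=
  fun u v => (u != v) && ~~ E u v.

Section Xi.
Variables (T : finType) (lab : T -> nat) (E : rel T).

(* (q, beta) is an ordered path cover: q is a sequencing (bijection
   [n] -> V, i.e. an injective map 'I_#|T| -> T, positions 0-indexed) and
   consecutive positions in the same block of beta are joined by an edge. *)
Definition is_opc (q : {ffun 'I_#|T| -> T}) (S : {set 'I_#|T|.-1}) : bool :=
  injectiveb q &&
  [forall j : 'I_#|T|.-1, (j \notin S) ==> E (q (cur_ord j)) (q (succ_ord j))].

Definition later (q : {ffun 'I_#|T| -> T}) (u v : T) : bool :=
  [exists i : 'I_#|T|, exists j : 'I_#|T|, [&& (i < j)%N, q i == u & q j == v]].

Definition asc (q : {ffun 'I_#|T| -> T}) : nat :=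
  #|[set p : T * T | [&& E p.1 p.2 == E p.2 p.1, (lab p.1 < lab p.2)%N
                       & later q p.1 p.2]]|.

Definition Xi : qsym #|T| :=
  [ffun S : {set 'I_#|T|.-1} =>
     \sum_(q : {ffun 'I_#|T| -> T} | is_opc q S) 'X ^+ asc q].

End Xi.

(* Fix a sequencing q and let G(q) be the set of positions j such that
   q(j) -> q(j+1) is an edge of D.  Then (q, beta) is an ordered path cover of
   D iff q is injective and every non-bar of beta lies in G(q).  Expanding
   omega Xi_D, the coefficient of t^asc(q) M_alpha is the alternating sum of
   (-1)^(n - l(beta)) over the bar sets beta containing alpha whose non-bars
   lie in G(q); putting C = non-bars of beta, this is the sum of (-1)^|C| over
   the subsets C of (non-bars of alpha) /\ G(q), which is 1 if that set is
   empty and 0 otherwise.  Emptiness says precisely that (q, alpha) is an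
   ordered path cover of the complement digraph, consecutive vertices of an
   injective q being distinct.  Finally asc(q) is the same for D and its
   complement, since "both or neither of u -> v, v -> u" is invariant under
   complementation. *)

From HB Require Import structures.
From mathcomp Require Import all_boot all_order all_algebra.
From mathcomp Require Import finmap.
Set Implicit Arguments.
Unset Strict Implicit.
Import GRing.Theory.
Local Open Scope ring_scope.

Lemma sum_subset_sign (R : pzRingType) (I : finType) (H : {set I}) :
  \sum_(C : {set I} | C \subset H) (-1) ^+ #|C| = (H == set0)%:R :> R.
Proof.
have [->|[x xH]] := set_0Vmem H.
  by rewrite eqxx (big_pred1 set0) ?cards0 // => C; rewrite subset0.
have -> : (H == set0) = false by apply/negP => /eqP H0; rewrite H0 inE in xH.
(* C |-> x |: C pairs the subsets avoiding x with those containing x. *)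
rewrite (bigID (fun C : {set I} => x \in C)) /=.
rewrite (reindex_onto (fun C => x |: C) (fun C => C :\ x)) /=; last first.
  by move=> C /andP[_ xC]; rewrite setD1K.
rewrite (eq_bigl (fun C : {set I} => (C \subset H) && (x \notin C))); last first.
  move=> C /=; rewrite setU11 andbT subUset sub1set xH /=.
  congr (_ && _); apply/idP/idP => [/eqP <-|xC]; first by rewrite !inE eqxx.
  by rewrite setU1K.
apply/eqP; rewrite addr_eq0 -sumrN; apply/eqP.
apply: eq_big => // C /andP[_ xnC].
by rewrite cardsU1 xnC exprD expr1 mulN1r.
Qed.

Lemma sum_supset_sign (R : pzRingType) (I : finType) (A G : {set I}) :
  \sum_(B : {set I} | (A \subset B) && (~: B \subset G)) (-1) ^+ (#|I| - #|B|)
  = (~: A :&: G == set0)%:R :> R.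
Proof.
rewrite (reindex_inj (@setC_inj I)) /= -sum_subset_sign.
apply: eq_big => C; first by rewrite setCK subsetI subsetC.
by rewrite -cardsCs.
Qed.

Lemma cur_ord_neq_succ_ord n (j : 'I_n.-1) : cur_ord j != succ_ord j.
Proof. by rewrite -val_eqE /= neq_ltn ltnSn. Qed.

Section OmegaXi.
Variables (T : finType) (lab : T -> nat) (E : rel T).

Definition edge_pos (q : {ffun 'I_#|T| -> T}) : {set 'I_#|T|.-1} :=
  [set j | E (q (cur_ord j)) (q (succ_ord j))].

Lemma is_opcE q B : is_opc E q B = injectiveb q && (~: B \subset edge_pos q).
Proof.
congr (_ && _); apply/forallP/subsetP => [opc j|sub j].
  by rewrite !inE => jB; have := opc j; rewrite jB.
by apply/implyP => jB; have := sub j; rewrite !inE jB => /(_ isT).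
Qed.

Lemma is_opc_complE q A :
  is_opc (digraph_compl E) q A = injectiveb q && (~: A :&: edge_pos q == set0).
Proof.
rewrite /is_opc; have [/injectiveP q_inj|] //= := boolP (injectiveb q).
apply/forallP/eqP => [opc|empty j].
  apply/setP => j; rewrite !inE; have := opc j.
  by case: (j \in A) => //= /andP[_ /negbTE ->].
apply/implyP => jA; rewrite /digraph_compl (inj_eq q_inj) cur_ord_neq_succ_ord /=.
apply/negP => e; have : j \in ~: A :&: edge_pos q by rewrite !inE jA e.
by rewrite empty inE.
Qed.

Lemma asc_compl q : asc lab (digraph_compl E) q = asc lab E q.
Proof.
apply: eq_card => -[u v]; rewrite !inE /digraph_compl /=.
have [lt_uv|_] := ltnP (lab u) (lab v); last by rewrite !andbF.
have neq_uv : u == v = false by apply: contraTF lt_uv => /eqP ->; rewrite ltnn.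
by rewrite [v == u]eq_sym neq_uv /=; case: (E u v); case: (E v u).
Qed.

Lemma qomega_Xi : qomega (Xi lab E) = Xi lab (digraph_compl E).
Proof.
apply/ffunP => A; rewrite !ffunE.
under eq_bigr do rewrite ffunE big_distrr.
rewrite (exchange_big_dep predT) //= [RHS]big_mkcond.
apply: eq_bigr => q _; rewrite -mulr_suml is_opc_complE asc_compl.
have [q_inj|q_ninj] /= := boolP (injectiveb q); last first.
  by rewrite big_pred0 ?mul0r // => B; rewrite is_opcE (negbTE q_ninj) /= andbF.
under eq_bigl do rewrite is_opcE q_inj /=.
have := sum_supset_sign {poly int} A (edge_pos q); rewrite card_ord => ->.
by case: eqP; rewrite ?mul1r ?mul0r.
Qed.

End OmegaXi.

Theorem theorem3p8 (V : {fset nat}) (E : rel V) :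
  (forall v : nat, v \in V -> (0 < v)%N) ->
  (forall v : V, ~~ E v v) ->
  qomega (Xi (fun v : V => val v) E) = Xi (fun v : V => val v) (digraph_compl E).
Proof.
by move=> _ _; apply: qomega_Xi.
Qed.
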